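(* Let $G$ be a connected graph with $n\ge2$ nodes and diameter $D$, with nonnegative integer loads, and run Algorithm 2. If the discrepancy of $G$ at the beginning of some round is $K\ge 2D$, then after that round the potential $p(G)$ has decreased by at least $K^2/(8D)$.
   Context: $G=(V,E)$ is an undirected connected graph, $n=|V|$, $D$ its diameter; each node $u$ holds an integer load $load(u)\ge 0$. $L_{max},L_{min}$ denote the current maximum and minimum load, the discrepancy is $K=L_{max}-L_{min}$, $L_{avg}$ the average load (invariant under transfers), and the potential is $p(G)=\sum_{u\in V}(load(u)-L_{avg})^2$. Algorithm 2 (single proposal, discrete) proceeds in synchronous rounds; in each round, using the loads at the start of the round: (1) every node $u$ having at least one neighbor $v$ with $load(v)\le load(u)-2$ picks the first neighbor $v$ (in a fixed order of its neighbors) maximizing $load(u)-load(v)$ and sends $v$ a proposal of value $p_{uv}=\lfloor (load(u)-load(v))/2\rfloor$; (2) every node that received at least one proposal accepts exactly one proposal of maximum value; (3) all accepted transfers are executed simultaneously (each accepted proposal $p_{wu}$ moves $p_{wu}$ from $w$ to $u$), and nodes report their new loads to neighbors. *)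

From mathcomp Require Import all_boot all_order all_algebra.
Set Implicit Arguments. Unset Strict Implicit. Unset Printing Implicit Defensive.
Import Order.TTheory GRing.Theory Num.Theory.

Definition ball (T : finType) (e : rel T) (k : nat) (u : T) : {set T} :=
  iter k (fun S => S :|: [set y | [exists x in S, e x y]]) [set u].

(* Graph distance (smallest k with v in ball k u); #|T| if unreachable. *)
Definition dist (T : finType) (e : rel T) (u v : T) : nat :=
  find (fun k => v \in ball e k u) (iota 0 #|T|).

Definition diameter (T : finType) (e : rel T) : nat :=
  \max_(u : T) \max_(v : T) dist e u v.

Definition Lmax (T : finType) (l : T -> nat) : nat := \max_(u : T) l u.
Definition Lmin (T : finType) (l : T -> nat) : nat := \big[minn/Lmax l]_(u : T) l u.
Definition discrepancy (T : finType) (l : T -> nat) : nat := Lmax l - Lmin l.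

Definition avg_load (T : finType) (l : T -> int) : rat :=
  (\sum_(u : T) (l u)%:~R) / (#|T|%:R).
Definition potential (T : finType) (l : T -> int) : rat :=
  \sum_(u : T) ((l u)%:~R - avg_load l) ^+ 2.

(* Algorithm 2, one round, loads l at the start of the round.
   nbrs u is the fixed order of the neighbours of u. *)
Section Round.
Variables (T : finType) (nbrs : T -> seq T) (l : T -> nat).

Definition proposes (u : T) : bool := has (fun v => l v + 2 <= l u) (nbrs u).

(* first neighbour (in order nbrs u) maximizing l u - l v, i.e. minimizing l v *)
Definition target (u : T) : T :=
  nth u (nbrs u) (find (fun v => all (fun w => l v <= l w) (nbrs u)) (nbrs u)).

Definition pval (u : T) : nat := (l u - l (target u)) %/ 2.

Definition proposal (w v : T) : bool := proposes w && (target w == v).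

(* acc v = Some w : v accepts the proposal of w; a valid acceptance rule:
   every node receiving a proposal accepts exactly one of maximum value. *)
Definition valid_acceptance (acc : T -> option T) : Prop :=
  forall v : T,
    (acc v = None <-> (forall w, ~~ proposal w v)) /\
    (forall w, acc v = Some w ->
       proposal w v /\ (forall w', proposal w' v -> pval w' <= pval w)).

Definition new_load (acc : T -> option T) (x : T) : int :=
  (l x)%:Z
  + (if acc x is Some w then (pval w)%:Z else 0)
  - \sum_(v : T | acc v == Some x) (pval x)%:Z.

End Round.

From mathcomp Require Import all_boot all_order all_algebra.
From mathcomp Require Import zify ring lra.
Import Order.TTheory GRing.Theory Num.Theory.
Set Implicit Arguments. Unset Strict Implicit. Unset Printing Implicit Defensive.

(* Write every accepted proposal as a transfer of p
      from w to v.  Since a node's proposal has a single target, a node sends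
      at most once and receives at most once, so the potential decreases by at
      least the sum over accepted transfers of the gain 2p(l w - l v - p); each
      gain is >= 2p^2, hence >= 2q^2 for every proposal of value q made to v.
   2. Layers.  Let u carry the maximal load and m = dist u v <= D the distance
      to a node v of minimal load.  The minimal load M k on the ball of radius
      k around u decreases from Lmax (k = 0) to Lmin (k = m); write
      z k = M k - M (k+1), so that sum z k = K.  When z k >= 2, the ball
      minimiser of radius k+1 has a neighbour in the ball of radius k whose
      proposal has value >= z k / 2, and its targets are distinct for distinct
      k.  Hence the total gain is at least sum_k 2 (z k / 2)^2.
   3. Arithmetic.  By Cauchy-Schwarz and m <= D, K >= 2D this sum is at least
      K^2/(8D). *)

Local Open Scope ring_scope.

Section Balls.
Variables (T : finType) (e : rel T).

Lemma ballS k u :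
  ball e k.+1 u = ball e k u :|: [set y | [exists x in ball e k u, e x y]].
Proof. by rewrite /ball iterS. Qed.

Lemma ball0 u : ball e 0 u = [set u].
Proof. by []. Qed.

Lemma ball_mono j k u : (j <= k)%N -> ball e j u \subset ball e k u.
Proof.
move=> /subnK <-; elim: (k - j)%N => [|i IH] //=.
by apply: subset_trans IH _; exact: subsetUl.
Qed.

Lemma ball_center k u : u \in ball e k u.
Proof. by apply: (subsetP (ball_mono u (leq0n k))); rewrite ball0 set11. Qed.

Lemma ball_step k u x y : x \in ball e k u -> e x y -> y \in ball e k.+1 u.
Proof.
by move=> hx hxy; rewrite ballS !inE; apply/orP; right; apply/existsP; exists x; rewrite hx.
Qed.

Lemma ball_path u p : path e u p -> last u p \in ball e (size p) u.
Proof.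
elim/last_ind: p => [|p y IH] /=; first by rewrite set11.
rewrite rcons_path last_rcons size_rcons => /andP [hp hy].
exact: ball_step (IH hp) hy.
Qed.

(* A connected node is reached by a duplicate-free path, of length < #|T|. *)
Lemma connect_ball u v : connect e u v -> exists2 k, (k < #|T|)%N & v \in ball e k u.
Proof.
move/connectP => [p hp ->]; case: (shortenP hp) => q hq uq _.
exists (size q); last exact: ball_path.
by have := max_card (mem (u :: q)); rewrite (card_uniqP uq).
Qed.

Lemma dist_ball u v : connect e u v -> v \in ball e (dist e u v) u.
Proof.
move=> /connect_ball [k hk hv].
have hex : has (fun k => v \in ball e k u) (iota 0 #|T|).
  by apply/hasP; exists k => //; rewrite mem_iota.
have := nth_find 0 hex; rewrite /dist nth_iota ?add0n //.
by rewrite -[X in (_ < X)%N](size_iota 0 #|T|) -has_find.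
Qed.

Lemma dist_le_diameter u v : (dist e u v <= diameter e)%N.
Proof.
apply: leq_trans (leq_bigmax u).
exact: (leq_bigmax (F := fun w => dist e u w) v).
Qed.

End Balls.

Lemma big_minn_le (I : eqType) (r : seq I) (x0 : nat) (F : I -> nat) i :
  i \in r -> (\big[minn/x0]_(j <- r) F j <= F i)%N.
Proof.
elim: r => [|y r IH] //; rewrite inE big_cons => /orP [/eqP <-|hr].
  exact: geq_minl.
exact: leq_trans (geq_minr _ _) (IH hr).
Qed.

Lemma discrepancy_extremes (T : finType) (l : T -> nat) u v :
  (forall x, l x <= l u)%N -> (forall x, l v <= l x)%N ->
  discrepancy l = (l u - l v)%N.
Proof.
move=> hu hv.
have hmax : Lmax l = l u.
  by apply/eqP; rewrite eqn_leq leq_bigmax andbT; apply/bigmax_leqP => x _.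
have hmin : Lmin l = l v.
  apply/eqP; rewrite eqn_leq big_minn_le ?mem_index_enum //=.
  apply: (big_ind (fun m => l v <= m)%N) => //; first by rewrite hmax.
  by move=> a b ha hb; rewrite leq_min ha hb.
by rewrite /discrepancy hmax hmin.
Qed.

Lemma target_spec (T : finType) (nbrs : T -> seq T) (l : T -> nat) u v0 :
  v0 \in nbrs u ->
  target nbrs l u \in nbrs u /\ forall w, w \in nbrs u -> (l (target nbrs l u) <= l w)%N.
Proof.
move=> hv0; case: (@arg_minnP _ v0 (mem (nbrs u)) l hv0) => m hm hmin.
set P := fun v => all (fun w => l v <= l w)%N (nbrs u).
have hP : has P (nbrs u) by apply/hasP; exists m => //; apply/allP => w /hmin.
have /allP ht := nth_find u hP; rewrite has_find in hP.
by split => //; exact: mem_nth.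
Qed.

(* A perturbation with zero total leaves the average load unchanged, so the
   potential changes by sum (2 f g + g^2). *)
Lemma potential_perturb (T : finType) (f h : T -> int) (g : T -> rat) :
  (forall x, (h x)%:~R = (f x)%:~R + g x) -> \sum_x g x = 0 ->
  potential h = potential f + \sum_x (2 * (f x)%:~R * g x + g x ^+ 2).
Proof.
move=> hfg g0.
have avg_eq : avg_load h = avg_load f.
  by rewrite /avg_load; under eq_bigr do rewrite hfg; rewrite big_split /= g0 addr0.
rewrite /potential avg_eq; set c := avg_load f.
have : \sum_x (((h x)%:~R - c) ^+ 2 - (((f x)%:~R - c) ^+ 2 + (2 * (f x)%:~R * g x + g x ^+ 2)))
    = - (2 * c) * \sum_x g x.
  by rewrite mulr_sumr; apply: eq_bigr => x _; rewrite hfg; ring.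
by rewrite g0 mulr0 sumrB big_split /= => /eqP; rewrite subr_eq0 => /eqP.
Qed.

Section Gain.
Variables (T : finType) (nbrs : T -> seq T) (l : T -> nat) (acc : T -> option T).
Hypothesis acc_ok : valid_acceptance nbrs l acc.

Let a x : rat := (l x)%:R.
Let p w : rat := (pval nbrs l w)%:R.
Let inflow x : rat := if acc x is Some w then p w else 0.
Let outflow x : rat := \sum_(v | acc v == Some x) p x.

(* Lower bound on the potential decrease due to the transfer accepted by v. *)
Definition gain v : rat :=
  if acc v is Some w then 2 * (pval nbrs l w)%:R * ((l w)%:R - (l v)%:R - (pval nbrs l w)%:R)
  else 0.

Lemma sum_by_acceptor (g : T -> rat) :
  \sum_x \sum_(v | acc v == Some x) g x = \sum_v (if acc v is Some w then g w else 0).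
Proof.
under eq_bigr do rewrite big_mkcond; rewrite exchange_big /=; apply: eq_bigr => v _.
rewrite -big_mkcond; case: (acc v) => [w|]; last by rewrite big_pred0.
by rewrite (big_pred1 w) // => x; rewrite eq_sym.
Qed.

(* A node's proposal has a single target, so at most one node accepts it. *)
Lemma outflow_sq x : outflow x ^+ 2 = \sum_(v | acc v == Some x) p x ^+ 2.
Proof.
rewrite /outflow; case: (pickP (fun v => acc v == Some x)) => [v0 hv0|none].
  have single v : (acc v == Some x) = (v == v0).
    apply/idP/idP => [/eqP hv|/eqP -> //].
    have [_ /(_ x hv) [/andP [_ /eqP <-] _]] := acc_ok v.
    by have [_ /(_ x (eqP hv0)) [/andP [_ /eqP <-] _]] := acc_ok v0.
  by rewrite !(eq_bigl _ _ single) !big_pred1_eq.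
by rewrite !big_pred0 // expr0n.
Qed.

Lemma net_flow_sum : \sum_x (inflow x - outflow x) = 0.
Proof. by rewrite sumrB sum_by_acceptor; apply/eqP; rewrite subr_eq0. Qed.

Lemma net_flow_sq :
  \sum_x (inflow x - outflow x) ^+ 2
    <= \sum_v (if acc v is Some w then 2 * p w ^+ 2 else 0).
Proof.
apply: (@le_trans _ _ (\sum_x (inflow x ^+ 2 + outflow x ^+ 2))).
  apply: ler_sum => x _.
  have in0 : 0 <= inflow x by rewrite /inflow; case: (acc x).
  have out0 : 0 <= outflow x by apply: sumr_ge0.
  nra.
rewrite big_split /=; under [X in _ + X]eq_bigr do rewrite outflow_sq.
rewrite sum_by_acceptor -big_split /= le_eqVlt; apply/orP; left; apply/eqP.
by apply: eq_bigr => v _; rewrite /inflow; case: (acc v) => [w|]; rewrite ?expr0n ?addr0 //; ring.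
Qed.

(* Main accounting: the potential drops by at least the total gain, since
   -2 sum l dx is the sum over transfers of 2p(l w - l v), and the squared
   net flows cost at most 2p^2 per transfer. *)
Lemma gain_le_decrease :
  \sum_v gain v <= potential (fun u => (l u)%:Z) - potential (new_load nbrs l acc).
Proof.
have hnew x : ((new_load nbrs l acc x)%:~R : rat)
    = ((l x)%:Z)%:~R + (inflow x - outflow x).
  by rewrite /new_load rmorphB rmorphD rmorph_sum /inflow /outflow addrA; case: (acc x).
have cross : \sum_x 2 * ((l x)%:Z)%:~R * (inflow x - outflow x)
    = - \sum_v (if acc v is Some w then 2 * p w * (a w - a v) else 0).
  have out_sum : \sum_x 2 * a x * outflow x
      = \sum_v (if acc v is Some w then 2 * a w * p w else 0).
    by under eq_bigr do rewrite /outflow mulr_sumr; rewrite sum_by_acceptor.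
  rewrite -sumrN; under eq_bigr do rewrite mulrBr.
  rewrite sumrB out_sum -sumrB; apply: eq_bigr => x _.
  by rewrite /inflow /a; case: (acc x) => [w|] /=; rewrite ?mulr0 ?subrr ?oppr0 //; ring.
rewrite (potential_perturb hnew net_flow_sum) big_split /= cross.
have gain_split : \sum_v gain v
    = \sum_v (if acc v is Some w then 2 * p w * (a w - a v) else 0)
      - \sum_v (if acc v is Some w then 2 * p w ^+ 2 else 0).
  rewrite -sumrB; apply: eq_bigr => v _.
  by rewrite /gain; case: (acc v) => [w|]; rewrite ?subr0 // /p /a; ring.
rewrite gain_split; have := net_flow_sq; lra.
Qed.

(* An accepted proposal of value q (at most half the load gap) gains 2q^2. *)
Lemma gain_accepted v w : acc v = Some w -> 2 * ((pval nbrs l w)%:R) ^+ 2 <= gain v.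
Proof.
move=> hv; rewrite /gain hv.
have [_ /(_ w hv) [/andP [_ /eqP tw] _]] := acc_ok v.
have -> : pval nbrs l w = ((l w - l v) %/ 2)%N by rewrite /pval tw.
set q := ((l w - l v) %/ 2)%N.
case: (leqP (l v) (l w)) => hle; last first.
  have -> : q = 0%N by rewrite /q; lia.
  by rewrite expr0n /= !mulr0 mul0r.
have : (2 * q)%:R <= ((l w - l v)%N)%:R :> rat by rewrite ler_nat /q; lia.
rewrite natrB // natrM => hq.
have : 0 <= q%:R :> rat by [].
nra.
Qed.

Lemma gain_ge0 v : 0 <= gain v.
Proof.
case hv: (acc v) => [w|]; last by rewrite /gain hv.
by apply: le_trans (gain_accepted hv); apply: mulr_ge0 => //; exact: sqr_ge0.
Qed.

(* Since v accepts a proposal of maximum value, any proposal to v is covered. *)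
Lemma gain_proposal x v : proposal nbrs l x v -> 2 * ((pval nbrs l x)%:R) ^+ 2 <= gain v.
Proof.
move=> hxv; case hv: (acc v) => [w|]; last first.
  by have [[/(_ hv) none _] _] := acc_ok v; move: (none x); rewrite hxv.
have [_ /(_ w hv) [_ hmax]] := acc_ok v.
apply: le_trans (gain_accepted hv).
have := hmax x hxv; rewrite -(ler_nat rat) => hle.
have : 0 <= (pval nbrs l x)%:R :> rat by [].
nra.
Qed.

End Gain.

Section Layers.
Variables (T : finType) (e : rel T) (nbrs : T -> seq T) (l : T -> nat) (u : T).
Hypothesis nbrs_adj : forall x y, (y \in nbrs x) = e x y.

Definition ball_argmin k : T := [arg min_(x < u in ball e k u) l x].
Definition ball_minload k : nat := l (ball_argmin k).

Lemma ball_argminP k :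
  ball_argmin k \in ball e k u /\ forall y, y \in ball e k u -> (ball_minload k <= l y)%N.
Proof.
by rewrite /ball_minload /ball_argmin; case: arg_minnP => [|x hx hmin]; [exact: ball_center|].
Qed.

Lemma ball_minload_mono j k : (j <= k)%N -> (ball_minload k <= ball_minload j)%N.
Proof.
move=> hjk; apply: (proj2 (ball_argminP k)).
exact: (subsetP (ball_mono e u hjk)) (proj1 (ball_argminP j)).
Qed.

Lemma ball_minload0 : ball_minload 0 = l u.
Proof. by have := proj1 (ball_argminP 0); rewrite ball0 in_set1 /ball_minload => /eqP ->. Qed.

Definition load_drop k : nat := (ball_minload k - ball_minload k.+1)%N.

Lemma sum_drops n : (\sum_(k < n) load_drop k)%N = (ball_minload 0 - ball_minload n)%N.
Proof.
elim: n => [|n IH]; first by rewrite big_ord0 subnn.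
rewrite big_ord_recr /= IH /load_drop.
by have := ball_minload_mono (leq0n n); have := ball_minload_mono (leqnSn n); lia.
Qed.

(* When the minimum drops, the new minimiser has a neighbour (the sender) in
   the smaller ball; the receiver is the target of the sender's proposal. *)
Definition drop_sender k : T :=
  odflt u [pick x in ball e k u | e x (ball_argmin k.+1)].
Definition drop_receiver k : T := target nbrs l (drop_sender k).

Lemma drop_senderP k :
  (0 < load_drop k)%N -> drop_sender k \in ball e k u /\ e (drop_sender k) (ball_argmin k.+1).
Proof.
move=> hz; rewrite /drop_sender; case: pickP => [x /andP [] //|none]; exfalso.
have := proj1 (ball_argminP k.+1); rewrite ballS in_setU => /orP [hin|].
  by have := proj2 (ball_argminP k) _ hin; rewrite /load_drop /ball_minload in hz *; lia.
by rewrite inE => /existsP [x /andP [h1 h2]]; move: (none x); rewrite h1 h2.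
Qed.

Lemma drop_receiverP k :
  (0 < load_drop k)%N ->
  drop_receiver k \in ball e k.+1 u /\ (l (drop_receiver k) <= ball_minload k.+1)%N.
Proof.
move=> hz; have [hx hxe] := drop_senderP hz.
have hnb : ball_argmin k.+1 \in nbrs (drop_sender k) by rewrite nbrs_adj.
have [t_nbr t_min] := target_spec l hnb.
split; last exact: t_min.
by apply: ball_step hx _; rewrite -nbrs_adj.
Qed.

Lemma drop_proposal k :
  (2 <= load_drop k)%N ->
  proposal nbrs l (drop_sender k) (drop_receiver k)
  /\ (load_drop k %/ 2 <= pval nbrs l (drop_sender k))%N.
Proof.
move=> hz; have hz0 : (0 < load_drop k)%N by lia.
have [hx hxe] := drop_senderP hz0; have [_ hrec] := drop_receiverP hz0.
have hmin := proj2 (ball_argminP k) _ hx.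
rewrite /load_drop /ball_minload in hz hrec hmin; split.
  rewrite /proposal eqxx andbT; apply/hasP; exists (ball_argmin k.+1).
    by rewrite nbrs_adj.
  lia.
by rewrite /pval -/(drop_receiver k); apply: leq_div2r; rewrite /load_drop /ball_minload; lia.
Qed.

(* Receivers at different radii differ: the receiver for radius j < k lies in
   the ball of radius k, whereas the receiver for radius k has load below the
   minimum over that ball. *)
Lemma drop_receiver_neq j k :
  (j < k)%N -> (0 < load_drop j)%N -> (0 < load_drop k)%N -> drop_receiver j != drop_receiver k.
Proof.
move=> hjk hj hk; apply/eqP => same.
have [hb _] := drop_receiverP hj; have [_ hl] := drop_receiverP hk.
have := proj2 (ball_argminP k) _ (subsetP (ball_mono e u hjk) _ hb).
by rewrite same; rewrite /load_drop in hk; lia.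
Qed.

(* Combinatorial core: the drops of at least 2 yield distinct receivers, each
   gaining at least 2 (drop/2)^2. *)
Lemma drops_le_gain (acc : T -> option T) m :
  valid_acceptance nbrs l acc ->
  \sum_(k < m) 2 * ((load_drop k %/ 2)%:R) ^+ 2 <= \sum_v gain nbrs l acc v :> rat.
Proof.
move=> acc_ok; pose S := [set k : 'I_m | (2 <= load_drop k)%N].
have inj : {in S &, injective (fun k : 'I_m => drop_receiver k)}.
  move=> j k; rewrite !inE => hj hk same; apply/val_inj/eqP; apply/negPn/negP => hne.
  case: (ltngtP j k) hne => // hjk _.
    by move: (drop_receiver_neq hjk (ltnW hj) (ltnW hk)); rewrite same eqxx.
  by move: (drop_receiver_neq hjk (ltnW hk) (ltnW hj)); rewrite same eqxx.
rewrite (bigID (mem S)) /= [X in _ + X]big1 ?addr0; last first.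
  by move=> k; rewrite inE -ltnNge => small; rewrite divn_small.
apply: (@le_trans _ _ (\sum_(k in S) gain nbrs l acc (drop_receiver k))).
  apply: ler_sum => k; rewrite inE => /drop_proposal [hp hq].
  apply: le_trans (gain_proposal acc_ok hp).
  move: hq; rewrite -(ler_nat rat) => hq.
  have : 0 <= ((load_drop k %/ 2)%N)%:R :> rat by [].
  nra.
rewrite -(big_imset _ inj) /= [X in _ <= X](bigID (mem [set drop_receiver (val k) | k in S])) /=.
by rewrite lerDl; apply: sumr_ge0 => w _; exact: gain_ge0.
Qed.

End Layers.

Lemma cauchy_schwarz_sum (m : nat) (w : 'I_m -> rat) :
  (\sum_k w k) ^+ 2 <= m%:R * \sum_k w k ^+ 2.
Proof.
case: m w => [|m] w; first by rewrite !big_ord0 expr0n.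
set W := \sum_k w k; set c := W / m.+1%:R.
have hm : (0 : rat) < m.+1%:R by rewrite ltr0n.
have dev0 : 0 <= \sum_k (w k - c) ^+ 2 by apply: sumr_ge0 => k _; exact: sqr_ge0.
have dev : \sum_k (w k - c) ^+ 2 = \sum_k w k ^+ 2 - 2 * c * W + m.+1%:R * c ^+ 2.
  have -> : m.+1%:R * c ^+ 2 = \sum_(k < m.+1) c ^+ 2 by rewrite sumr_const card_ord mulr_natl.
  by rewrite /W mulr_sumr -sumrB -big_split /=; apply: eq_bigr => k _; ring.
have Wc : W = m.+1%:R * c by rewrite /c mulrC divfK // gt_eqF.
rewrite dev Wc in dev0 *; nra.
Qed.

Lemma drops_bound (m D K : nat) (z : 'I_m -> nat) :
  (m <= D)%N -> (\sum_k z k)%N = K -> (2 * D <= K)%N ->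
  (K%:R ^+ 2 / (8 * D%:R) : rat) <= \sum_k 2 * ((z k %/ 2)%:R) ^+ 2.
Proof.
move=> hmD hz hK; case: (posnP m) => [m0|mpos].
  by subst m; rewrite big_ord0 in hz; subst K; rewrite expr0n /= mul0r big_ord0.
pose w k : rat := ((z k - 1)%N)%:R.
have w_le k : w k ^+ 2 <= 4 * ((z k %/ 2)%:R) ^+ 2.
  have : (z k - 1 <= 2 * (z k %/ 2))%N by lia.
  rewrite -(ler_nat rat) natrM => hle.
  have : 0 <= w k by [].
  rewrite /w; nra.
have K_le : (K%:R : rat) <= 2 * \sum_k w k.
  rewrite /w -natr_sum -natrM ler_nat.
  have : (K <= \sum_k (z k - 1) + m)%N.
    rewrite -hz -[X in (_ + X)%N](card_ord m) -sum1_card -big_split /=.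
    by apply: leq_sum => k _; lia.
  lia.
have sq_le : \sum_k w k ^+ 2 <= 4 * \sum_k ((z k %/ 2)%:R : rat) ^+ 2.
  by rewrite mulr_sumr; apply: ler_sum => k _.
have cs := cauchy_schwarz_sum w.
rewrite -mulr_sumr ler_pdivrMr; last by rewrite mulr_gt0 // ltr0n; lia.
set Q := \sum_k ((z k %/ 2)%:R : rat) ^+ 2 in sq_le *.
set S := \sum_k w k in K_le cs; set S2 := \sum_k w k ^+ 2 in sq_le cs.
have S0 : 0 <= S by apply: sumr_ge0.
have S20 : 0 <= S2 by apply: sumr_ge0 => k _; exact: sqr_ge0.
have mD : (m%:R : rat) <= D%:R by rewrite ler_nat.
have K0 : (0 : rat) <= K%:R by [].
have D0 : (0 : rat) <= D%:R by [].
have K2 : (K%:R : rat) ^+ 2 <= 4 * S ^+ 2 by nra.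
have mS2 : m%:R * S2 <= D%:R * S2 by rewrite ler_wpM2r.
have DS2 : D%:R * S2 <= D%:R * (4 * Q) by rewrite ler_wpM2l.
nra.
Qed.

Unset Implicit Arguments.

Theorem lemma5 (T : finType) (e : rel T)
  (e_sym : symmetric e) (e_irr : irreflexive e)
  (e_conn : forall u v : T, connect e u v)
  (n_ge2 : (1 < #|T|)%N)
  (nbrs : T -> seq T)
  (nbrs_uniq : forall u, uniq (nbrs u))
  (nbrs_adj : forall u v, (v \in nbrs u) = e u v)
  (l : T -> nat) (acc : T -> option T)
  (acc_ok : valid_acceptance nbrs l acc)
  (hK : (2 * diameter e <= discrepancy l)%N) :
  potential (fun u => (l u)%:Z) - potential (new_load nbrs l acc)
    >= ((discrepancy l)%:R ^+ 2) / (8 * (diameter e)%:R).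
Proof.
have [x0 _] : exists x0 : T, true by case/card_gt0P: (ltnW n_ge2) => x _; exists x.
case: (@arg_maxnP T x0 xpredT l isT) => u _ umax.
case: (@arg_minnP T x0 xpredT l isT) => v _ vmin.
pose m := dist e u v.
have minload_m : ball_minload e l u m = l v.
  apply/anti_leq; rewrite (proj2 (ball_argminP e l u m) v (dist_ball (e_conn u v))).
  exact: vmin.
have drops_sum : (\sum_(k < m) load_drop e l u k)%N = discrepancy l.
  by rewrite sum_drops ball_minload0 minload_m (discrepancy_extremes (fun x => umax x isT) (fun x => vmin x isT)).
apply: le_trans (gain_le_decrease acc_ok).
apply: le_trans (drops_le_gain u nbrs_adj m acc_ok).
exact: drops_bound (dist_le_diameter e u v) drops_sum hK.
Qed.
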